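(* Let $d_1,\dots,d_k$ be positive integers. Then the tensor rank of $W_{d_1}\otimes\cdots\otimes W_{d_k}$, viewed as an element of $(\mathbb{C}^2)^{\otimes(d_1+\cdots+d_k)}$, satisfies $$R_{1,\dots,1}(W_{d_1}\otimes\cdots\otimes W_{d_k})\geq d_1+\cdots+d_k-k+1.$$
   Context: With a basis $\{x,y\}$ of $\mathbb{C}^2$, $W_d=\sum_{j=1}^d x\otimes\cdots\otimes x\otimes y\otimes x\otimes\cdots\otimes x\in(\mathbb{C}^2)^{\otimes d}$ ($y$ in the $j$-th position), i.e. the symmetric tensor corresponding to $x^{d-1}y$. $R_{1,\dots,1}$ denotes tensor rank: the minimal $r$ such that the tensor is a sum of $r$ tensors of the form $v_1\otimes\cdots\otimes v_m$ with $v_j\in\mathbb{C}^2$. *)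

From mathcomp Require Import all_boot all_order all_algebra.
From mathcomp Require Import complex.
From mathcomp Require Import Rstruct.
From Stdlib Require Import Reals.
Set Implicit Arguments. Unset Strict Implicit. Unset Printing Implicit Defensive.
Import Order.TTheory GRing.Theory Num.Theory.
Local Open Scope ring_scope.

Definition C : numClosedFieldType := (Rdefinitions.R)[i].

(* Basis of C^2: false <-> x, true <-> y.  A tensor in (C^2)^{⊗ m} is given by
   its coordinates on the basis e_{b_1}⊗...⊗e_{b_m}, b : 'I_m -> bool. *)
Definition tensor (m : nat) := ('I_m -> bool) -> C.

Definition simple_tensor m (v : 'I_m -> bool -> C) : tensor m :=
  fun b => \prod_(j < m) v j (b j).

(* T is a sum of r simple tensors, i.e. R_{1,...,1}(T) <= r. *)
Definition sum_of_simple m (T : tensor m) (r : nat) : Prop :=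
  exists v : 'I_r -> 'I_m -> bool -> C,
    forall b, T b = \sum_(i < r) simple_tensor (v i) b.

(* W_d = sum_j x ⊗ .. ⊗ y (j-th) ⊗ .. ⊗ x. *)
Definition W (d : nat) : tensor d :=
  fun c => \sum_(j < d) (if [forall i, c i == (i == j)] then 1 else 0).

Fixpoint Wprod (ds : seq nat) : tensor (sumn ds) :=
  match ds return tensor (sumn ds) with
  | [::] => fun _ => 1
  | d :: ds' => fun b =>
      W (fun j => b (lshift (sumn ds') j)) * Wprod (fun j => b (rshift d j))
  end.
Arguments Wprod : clear implicits.
Arguments W : clear implicits.

From mathcomp Require Import all_boot all_order all_algebra zify ring.
From mathcomp Require Import complex Rstruct.

(* Substitution method.  Contracting slot j of a tensor T with the covector
   x* + beta y* and refilling the slot with x maps a sum of r simple tensors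
   to a sum of r - 1 of them, once beta is chosen to kill a summand whose j-th
   factor has a nonzero y-coordinate; such a summand exists as soon as T has
   a nonzero coordinate with y in slot j.  Each factor of W_{d_1} ⊗ ... ⊗
   W_{d_k} is a block W + c x^{⊗d} with c = 0, and contracting a slot of a
   block with at least two slots leaves x ⊗ (W + (c + beta) x^{⊗(d-1)}): a
   tensor of the same shape with one active slot fewer, which still has a
   nonzero coordinate with y in any prescribed active slot.  After
   d_1 + ... + d_k - k steps every block has a single slot and the tensor is
   still nonzero, so the rank was at least d_1 + ... + d_k - k + 1. *)

Set Implicit Arguments. Unset Strict Implicit. Unset Printing Implicit Defensive.
Import Order.TTheory GRing.Theory Num.Theory.
Local Open Scope ring_scope.

Lemma sum_of_simple_eq m (T T' : tensor m) r :
  T =1 T' -> sum_of_simple T r -> sum_of_simple T' r.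
Proof. by move=> eqT [v Tv]; exists v => b; rewrite -eqT. Qed.

(* Apply the covector x* + beta y* to slot j, then put x back in slot j. *)
Definition contract m (j : 'I_m) (beta : C) (T : tensor m) : tensor m :=
  fun b => if b j then 0
           else T [eta b with j |-> false] + beta * T [eta b with j |-> true].

Definition contract_vec (beta : C) (u : bool -> C) : bool -> C :=
  fun c => if c then 0 else u false + beta * u true.

Lemma contract_simple m j beta (v : 'I_m -> bool -> C) :
  contract j beta (simple_tensor v) =1
  simple_tensor [eta v with j |-> contract_vec beta (v j)].
Proof.
move=> b; rewrite /contract /simple_tensor (bigD1 j) //.
rewrite [in X in _ + X](bigD1 j) //.
rewrite [RHS](bigD1 j) //= !eqxx /contract_vec.
case: (b j); first by rewrite mul0r.
have off_j (u : 'I_m -> bool) : (forall l, l != j -> u l = b l) ->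
    \prod_(l < m | l != j) v l (u l) = \prod_(l < m | l != j) v l (b l).
  by move=> ub; apply: eq_bigr => l /ub ->.
rewrite !off_j => [|l /negbTE->|l /negbTE->] //.
rewrite [in RHS](eq_bigr (fun l => v l (b l))) => [|l /negbTE-> //].
by rewrite mulrDl mulrA.
Qed.

Lemma sum_of_simple_contract m (T : tensor m) r j (b : 'I_m -> bool) :
  b j -> T b != 0 -> sum_of_simple T r ->
  exists beta, sum_of_simple (contract j beta T) r.-1.
Proof.
move=> bj Tb_neq0 [v Tv].
have [i0 vi0j] : exists i0, v i0 j true != 0.
  apply/existsP; apply: contraNT Tb_neq0 => /existsPn vj0.
  rewrite Tv big1 // => i _.
  by rewrite /simple_tensor (bigD1 j) //= bj (eqP (negbNE (vj0 i))) mul0r.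
case: r i0 v Tv vi0j => [[] //|r] i0 v Tv vi0j.
(* beta kills the i0-th summand. *)
pose beta := - v i0 j false / v i0 j true.
exists beta.
exists (fun i =>
  [eta v (lift i0 i) with j |-> contract_vec beta (v (lift i0 i) j)]).
move=> b'; have -> : contract j beta T b' =
    \sum_(i < r.+1) contract j beta (simple_tensor (v i)) b'.
  rewrite /contract !Tv; case: (b' j); first by rewrite big1.
  by rewrite mulr_sumr -big_split.
rewrite (bigD1_ord i0) //= contract_simple.
rewrite {1}/simple_tensor (bigD1 j) //= eqxx.
have -> : contract_vec beta (v i0 j) (b' j) = 0.
  by rewrite /contract_vec /beta divfK // subrr; case: (b' j).
by rewrite mul0r add0r; apply: eq_bigr => i _; rewrite contract_simple.
Qed.

(* The coordinate of W_d + c x^{⊗d} at a basis tensor with n factors y. *)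
Definition Wc_coord (c : C) (n : nat) : C :=
  if n == 1%N then 1 else if n == 0%N then c else 0.

Lemma Wc_coordS c beta n :
  Wc_coord c n + beta * Wc_coord c n.+1 = Wc_coord (c + beta) n.
Proof.
by case: n => [|[|n]]; rewrite /Wc_coord /= ?mulr1 ?mulr0 ?addr0 ?add0r.
Qed.

Lemma W_Wc_coord d (c : 'I_d -> bool) :
  W d c = Wc_coord 0 (\sum_(p < d) c p)%N.
Proof.
have -> : (\sum_(p < d) c p)%N = #|[set p | c p]|.
  rewrite -sum1dep_card [RHS]big_mkcond.
  by apply: eq_bigr => p _; case: (c p).
have W_term j : [forall i, c i == (i == j)] = ([set p | c p] == [set j]).
  apply/forallP/eqP => [cj | /setP cj i]; last first.
    by move: (cj i); rewrite !inE => ->.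
  by apply/setP => i; rewrite !inE; apply/eqP/cj.
rewrite /W /Wc_coord; under eq_bigr => j _ do rewrite W_term.
case: cards1P => [[x ->] | not1]; last first.
  case: ifP => _; apply: big1 => j _;
    by case: eqP => // eq_j; case: not1; exists j.
under eq_bigr => j _ do rewrite (inj_eq set1_inj) eq_sym.
by rewrite -big_mkcond big_pred1_eq.
Qed.

(* Slots labelled [None] carry x; the slots labelled [g] together carry
   W + (c g) x^{⊗}. *)
Definition block_tensor m k (blk : 'I_m -> option 'I_k) (c : 'I_k -> C) :
  tensor m :=
  fun b => \prod_(p | blk p == None) (~~ b p)%:R *
           \prod_(g < k) Wc_coord (c g) (\sum_(p | blk p == Some g) b p)%N.

Lemma block_tensor_section_coord m k (blk : 'I_m -> option 'I_k) c
    (w : 'I_k -> 'I_m) :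
  (forall g, blk (w g) = Some g) ->
  block_tensor blk c (fun p => if blk p is Some g then p == w g else false) = 1.
Proof.
move=> wK; rewrite /block_tensor big1 => [|p /eqP-> //].
rewrite mul1r big1 // => g _.
rewrite (bigD1 (w g)) ?wK ?eqxx //= big1 // => p /andP[/eqP-> /negbTE->] //.
Qed.

Lemma contract_block_tensor m k (blk : 'I_m -> option 'I_k) c j g beta :
  blk j = Some g ->
  contract j beta (block_tensor blk c) =1
  block_tensor [eta blk with j |-> None] [eta c with g |-> c g + beta].
Proof.
move=> blk_j b.
rewrite /contract /block_tensor [in RHS](bigD1 j) /= ?eqxx //.
case: ifP => bj; first by rewrite /= mulr0n !mul0r.
have x_slots v : \prod_(p | blk p == None) (~~ if p == j then v else b p)%:R =
    \prod_(p | ((if p == j then None else blk p) == None) && (p != j))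
      (~~ b p)%:R :> C.
  apply: eq_big => [p|p]; case: (eqVneq p j) => [->|pj];
    by rewrite ?blk_j ?eqxx ?(negbTE pj) ?andbT.
have y_slots h v : h != g ->
    (\sum_(p | blk p == Some h) (if p == j then v else b p) =
     \sum_(p | (if p == j then None else blk p) == Some h) b p)%N.
  move=> hg; have gh : (Some g == Some h) = false.
    by apply/eqP => -[/eqP]; rewrite eq_sym (negbTE hg).
  apply: eq_big => [p|p]; case: (eqVneq p j) => [->|pj];
    by rewrite ?eqxx ?blk_j ?gh ?(negbTE pj).
have y_slots_g v :
    (\sum_(p | blk p == Some g) (if p == j then v else b p) =
     v + \sum_(p | (if p == j then None else blk p) == Some g) b p)%N.
  rewrite (bigD1 j) ?blk_j //= eqxx.
  congr (_ + _)%N; apply: eq_big => [p|p]; case: (eqVneq p j) => [->|pj];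
    by rewrite ?eqxx ?andbF ?(negbTE pj) ?andbT.
have y_rest v : \prod_(h < k | h != g)
      Wc_coord (c h)
        (\sum_(p | blk p == Some h) (if p == j then v else b p))%N =
    \prod_(h < k | h != g)
      Wc_coord (if h == g then c g + beta else c h)
        (\sum_(p | (if p == j then None else blk p) == Some h) b p)%N.
  by apply: eq_bigr => h hg; rewrite y_slots //= (negbTE hg).
have split_g (F : 'I_k -> C) :
    \prod_(h < k) F h = F g * \prod_(h < k | h != g) F h by rewrite (bigD1 g).
rewrite !x_slots !split_g !y_slots_g !y_rest add0n add1n /= eqxx -Wc_coordS.
ring.
Qed.

Lemma leq_card_some_in (T U : finType) (f : T -> option U) :
  {in [pred x | f x != None] &, injective f} ->
  (#|[pred x | f x != None]| <= #|U|)%N.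
Proof.
move=> f_inj; rewrite -(card_in_imset f_inj) -[#|U|]/(#|U|.+1.-1).
rewrite -card_option -(cardsC1 None); apply: subset_leq_card.
by apply/subsetP => _ /imsetP[x fx ->]; rewrite !inE.
Qed.

Lemma block_tensor_rank m k (blk : 'I_m -> option 'I_k) c r :
  (forall g, exists p, blk p = Some g) -> sum_of_simple (block_tensor blk c) r ->
  (#|[pred p | blk p != None]| - k < r)%N.
Proof.
elim: r blk c => [|r IHr] blk c blk_onto sosT.
all: have [w wK] := fin_all_exists blk_onto.
  case: sosT => v /(_ (fun p => if blk p is Some g then p == w g else false)).
  by rewrite block_tensor_section_coord // big_ord0 => /eqP; rewrite oner_eq0.
have [/existsP[p /existsP[q /and3P[pq blk_p /eqP blk_pq]]] | no_pair] :=
  boolP [exists p, exists q, [&& p != q, blk p != None & blk p == blk q]].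
  case blk_p_g: (blk p) blk_p blk_pq => [g|] // _ blk_q.
  (* Contract at p; q keeps block g nonempty. *)
  pose w' h := if h == g then p else w h.
  have w'K h : blk (w' h) = Some h by rewrite /w'; case: eqP => [->|].
  pose b x := if blk x is Some h then x == w' h else false.
  have b_p : b p by rewrite /b blk_p_g /w' eqxx.
  have T_b : block_tensor blk c b != 0.
    by rewrite block_tensor_section_coord // oner_eq0.
  have [beta sosT'] := sum_of_simple_contract b_p T_b sosT.
  have blk'_onto h : exists x, [eta blk with p |-> None] x = Some h.
    case: (eqVneq h g) => [->|hg].
      by exists q; rewrite /= eq_sym (negbTE pq).
    exists (w h) => /=; case: eqP => [whp|_]; last exact: wK.
    by move: (wK h); rewrite whp blk_p_g => -[gh]; rewrite gh eqxx in hg.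
  have := IHr _ _ blk'_onto
    (sum_of_simple_eq (contract_block_tensor c beta blk_p_g) sosT').
  have -> : #|[pred x | [eta blk with p |-> None] x != None]| =
            #|[pred x | blk x != None]|.-1.
    rewrite [in RHS](cardD1 p) inE blk_p_g /=.
    by apply: eq_card => x; rewrite !inE /=; case: (eqVneq x p).
  lia.
have blk_inj : {in [pred x | blk x != None] &, injective blk}.
  move=> x y; rewrite inE => blk_x _ blk_xy; apply/eqP.
  apply: contraNT no_pair => xy; apply/existsP; exists x; apply/existsP.
  by exists y; rewrite xy blk_x blk_xy eqxx.
suff /eqP-> : (#|[pred x | blk x != None]| - k == 0)%N by [].
by rewrite subn_eq0 -[k in (_ <= k)%N]card_ord leq_card_some_in.
Qed.

Fixpoint block_index (ds : seq nat) : 'I_(sumn ds) -> 'I_(size ds) :=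
  match ds return 'I_(sumn ds) -> 'I_(size ds) with
  | [::] => id
  | d :: ds' => fun p =>
      if split p is inr q then lift ord0 (block_index q) else ord0
  end.
Arguments block_index : clear implicits, simpl never.

Lemma block_index_lshift d ds (i : 'I_d) :
  block_index (d :: ds) (lshift (sumn ds) i) = ord0.
Proof. by rewrite /block_index /= (unsplitK (inl i : _ + 'I_(sumn ds))). Qed.

Lemma block_index_rshift d ds (q : 'I_(sumn ds)) :
  block_index (d :: ds) (rshift d q) = lift ord0 (block_index ds q).
Proof. by rewrite /block_index /= (unsplitK (inr q : 'I_d + _)). Qed.

Lemma block_index_onto ds :
  all (fun d => 0 < d)%N ds -> forall g, exists p, block_index ds p = g.
Proof.
elim: ds => [|d ds IHds] /=; first by move=> _ [].
case/andP=> d_gt0 /IHds onto g; case: (unliftP ord0 g) => [h ->|->].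
  by have [q <-] := onto h; exists (rshift d q); rewrite block_index_rshift.
by exists (lshift (sumn ds) (Ordinal d_gt0)); rewrite block_index_lshift.
Qed.

Lemma Wprod_coordE ds b :
  Wprod ds b =
  \prod_(g < size ds) Wc_coord 0 (\sum_(p | block_index ds p == g) b p)%N.
Proof.
elim: ds b => [|d ds IHds] b; first by rewrite big_ord0.
have sum_ord0 : (\sum_(p | block_index (d :: ds) p == ord0) b p =
                 \sum_(i < d) b (lshift (sumn ds) i))%N.
  rewrite big_split_ord /= [X in (_ + X)%N]big_pred0 => [|q].
    by rewrite addn0; apply: eq_bigl => i; rewrite block_index_lshift eqxx.
  by rewrite block_index_rshift eq_sym (negbTE (neq_lift _ _)).
have sum_lift (h : 'I_(size ds)) :
    (\sum_(p | block_index (d :: ds) p == lift ord0 h) b p =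
     \sum_(q | block_index ds q == h) b (rshift d q))%N.
  rewrite big_split_ord /= big_pred0 => [|i].
    rewrite add0n; apply: eq_bigl => q.
    by rewrite block_index_rshift (inj_eq lift_inj).
  by rewrite block_index_lshift (negbTE (neq_lift _ _)).
rewrite big_ord_recl sum_ord0 /= IHds W_Wc_coord; congr (_ * _).
by apply: eq_bigr => h _; rewrite sum_lift.
Qed.

Lemma Wprod_block_tensor ds :
  Wprod ds =1 block_tensor (fun p => Some (block_index ds p)) (fun=> 0).
Proof.
move=> b; rewrite Wprod_coordE /block_tensor big_pred0 // mul1r.
by apply: eq_bigr => g _; congr Wc_coord; apply: eq_bigl => p; rewrite inj_eq.
Qed.

Theorem proposition4p3 (ds : seq nat) :
  all (fun d => 0 < d)%N ds ->
  forall r : nat, sum_of_simple (Wprod ds) r ->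
  (sumn ds - size ds + 1 <= r)%N.
Proof.
move=> ds_pos r sosW.
have blk_onto g : exists p, Some (block_index ds p) = Some g.
  by have [p <-] := block_index_onto ds_pos g; exists p.
have := block_tensor_rank blk_onto
  (sum_of_simple_eq (@Wprod_block_tensor ds) sosW).
by rewrite (eq_card (B := 'I_(sumn ds))) // card_ord addn1.
Qed.
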